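(* Let $G$ be a structured quadratic-bilinear system given by $(\mathcal C,\mathcal K,\mathcal B,\mathcal N,\mathcal H)$ with structured generalized transfer functions, and $\widehat G$ the reduced-order system obtained by projection with $V,W\in\mathbb C^{n\times r}$, with reduced generalized transfer functions denoted by hats. Let $\sigma_1,\sigma_2,\sigma_3\in\mathbb C$ be such that $\mathcal C,\mathcal K,\mathcal B,\mathcal N$ can be evaluated at them, $\mathcal H$ at $(\sigma_2,\sigma_1)$, and $\mathcal K(\sigma_1),\mathcal K(\sigma_2),\mathcal K(\sigma_3)$ are invertible. Define $$V_{1,1}=\mathcal K(\sigma_1)^{-1}\mathcal B(\sigma_1),\quad V_{1,2}=\mathcal K(\sigma_2)^{-1}\mathcal B(\sigma_2),\quad V_2=\mathcal K(\sigma_2)^{-1}\mathcal N(\sigma_1)(I_m\otimes V_{1,1}),$$ $$V_{3,1}=\mathcal K(\sigma_3)^{-1}\mathcal N(\sigma_2)(I_m\otimes V_2),\quad V_{3,2}=\mathcal K(\sigma_3)^{-1}\mathcal H(\sigma_2,\sigma_1)(V_{1,2}\otimes V_{1,1}).$$ Suppose $V$ has full column rank with $\operatorname{span}(V)\supseteq\operatorname{span}([V_{1,1}\ V_{1,2}\ V_2\ V_{3,1}\ V_{3,2}])$, and $W$ is an arbitrary full-rank matrix of the same size with $W^{\mathsf H}\mathcal K(\sigma_i)V$ invertible for $i=1,2,3$. Then $$G_1^{(B)}(\sigma_1)=\widehat G_1^{(B)}(\sigma_1),\quad G_1^{(B)}(\sigma_2)=\widehat G_1^{(B)}(\sigma_2),\quad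 G_2^{(N,(B))}(\sigma_1,\sigma_2)=\widehat G_2^{(N,(B))}(\sigma_1,\sigma_2),$$ $$G_3^{(N,(N,(B)))}(\sigma_1,\sigma_2,\sigma_3)=\widehat G_3^{(N,(N,(B)))}(\sigma_1,\sigma_2,\sigma_3),\quad G_3^{(H,(B),(B))}(\sigma_1,\sigma_2,\sigma_3)=\widehat G_3^{(H,(B),(B))}(\sigma_1,\sigma_2,\sigma_3).$$
   Context: A structured quadratic-bilinear system (in frequency domain) with $n$ states, $m$ inputs and $p$ outputs is given by matrix-valued functions $\mathcal C:\mathbb C\to\mathbb C^{p\times n}$, $\mathcal K:\mathbb C\to\mathbb C^{n\times n}$, $\mathcal B:\mathbb C\to\mathbb C^{n\times m}$, $\mathcal N:\mathbb C\to\mathbb C^{n\times nm}$ with $\mathcal N(s)=[\mathcal N_1(s)\ \cdots\ \mathcal N_m(s)]$, $\mathcal N_j(s)\in\mathbb C^{n\times n}$, and $\mathcal H:\mathbb C\times\mathbb C\to\mathbb C^{n\times n^2}$. Its structured generalized transfer functions are $G_1^{(B)}(s_1)=\mathcal C(s_1)\mathcal K(s_1)^{-1}\mathcal B(s_1)$, $G_2^{(N,(B))}(s_1,s_2)=\mathcal C(s_2)\mathcal K(s_2)^{-1}\mathcal N(s_1)\big(I_m\otimes\mathcal K(s_1)^{-1}\mathcal B(s_1)\big)$, $G_3^{(N,(N,(B)))}(s_1,s_2,s_3)=\mathcal C(s_3)\mathcal K(s_3)^{-1}\mathcal N(s_2)\Big(I_m\otimes\mathcal K(s_2)^{-1}\mathcal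 N(s_1)\big(I_m\otimes\mathcal K(s_1)^{-1}\mathcal B(s_1)\big)\Big)$, $G_3^{(H,(B),(B))}(s_1,s_2,s_3)=\mathcal C(s_3)\mathcal K(s_3)^{-1}\mathcal H(s_2,s_1)\big(\mathcal K(s_2)^{-1}\mathcal B(s_2)\otimes\mathcal K(s_1)^{-1}\mathcal B(s_1)\big)$, wherever the inverses exist; $\otimes$ is the Kronecker product. The reduced-order system obtained by projection with $V,W\in\mathbb C^{n\times r}$ is given by $\widehat{\mathcal C}(s)=\mathcal C(s)V$, $\widehat{\mathcal K}(s)=W^{\mathsf H}\mathcal K(s)V$, $\widehat{\mathcal B}(s)=W^{\mathsf H}\mathcal B(s)$, $\widehat{\mathcal N}(s)=W^{\mathsf H}\mathcal N(s)(I_m\otimes V)$, $\widehat{\mathcal H}(s_1,s_2)=W^{\mathsf H}\mathcal H(s_1,s_2)(V\otimes V)$, where $W^{\mathsf H}$ is the conjugate transpose; its generalized transfer functions $\widehat G$ are defined by the same formulas with hatted functions. *)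

From HB Require Import structures.
From mathcomp Require Import all_boot all_order all_algebra.
From mathcomp Require Import reals.
From mathcomp.real_closed Require Import complex mxtens.
Set Implicit Arguments. Unset Strict Implicit. Unset Printing Implicit Defensive.
Import GRing.Theory Num.Theory.
Local Open Scope ring_scope.

Definition ctrmx (R : rcfType) (n r : nat) (W : 'M[R[i]]_(n, r)) : 'M[R[i]]_(r, n) :=
  (map_mx (@conjc R) W)^T.

Section TransferFunctions.
Variable C : comUnitRingType.
Variables (n m p : nat).
Variable Cf : C -> 'M[C]_(p, n).
Variable Kf : C -> 'M[C]_n.
Variable Bf : C -> 'M[C]_(n, m).
Variable Nf : C -> 'M[C]_(n, m * n).
Variable Hf : C -> C -> 'M[C]_(n, n * n).

Definition G1B (s1 : C) : 'M[C]_(p, m) :=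
  Cf s1 *m invmx (Kf s1) *m Bf s1.

Definition G2NB (s1 s2 : C) : 'M[C]_(p, m * m) :=
  Cf s2 *m invmx (Kf s2) *m
    (Nf s1 *m ((1%:M : 'M[C]_m) *t (invmx (Kf s1) *m Bf s1))).

Definition G3NNB (s1 s2 s3 : C) : 'M[C]_(p, m * (m * m)) :=
  Cf s3 *m invmx (Kf s3) *m
    (Nf s2 *m ((1%:M : 'M[C]_m) *t
       (invmx (Kf s2) *m
          (Nf s1 *m ((1%:M : 'M[C]_m) *t (invmx (Kf s1) *m Bf s1)))))).

Definition G3HBB (s1 s2 s3 : C) : 'M[C]_(p, m * m) :=
  Cf s3 *m invmx (Kf s3) *m
    (Hf s2 s1 *m ((invmx (Kf s2) *m Bf s2) *t (invmx (Kf s1) *m Bf s1))).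
End TransferFunctions.

Section Projection.
Variable R : rcfType.
Local Notation C := (R[i]).
Variables (n m p r : nat).
Variables (V W : 'M[C]_(n, r)).

Definition redC (Cf : C -> 'M[C]_(p, n)) : C -> 'M[C]_(p, r) :=
  fun s => Cf s *m V.
Definition redK (Kf : C -> 'M[C]_n) : C -> 'M[C]_r :=
  fun s => ctrmx W *m Kf s *m V.
Definition redB (Bf : C -> 'M[C]_(n, m)) : C -> 'M[C]_(r, m) :=
  fun s => ctrmx W *m Bf s.
Definition redN (Nf : C -> 'M[C]_(n, m * n)) : C -> 'M[C]_(r, m * r) :=
  fun s => ctrmx W *m Nf s *m ((1%:M : 'M[C]_m) *t V).
Definition redH (Hf : C -> C -> 'M[C]_(n, n * n)) : C -> C -> 'M[C]_(r, r * r) :=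
  fun s1 s2 => ctrmx W *m Hf s1 s2 *m (V *t V).
End Projection.

From HB Require Import structures.
From mathcomp Require Import all_boot all_order all_algebra.
From mathcomp Require Import reals.
From mathcomp.real_closed Require Import complex mxtens.
Set Implicit Arguments. Unset Strict Implicit. Unset Printing Implicit Defensive.
Import GRing.Theory Num.Theory.
Local Open Scope ring_scope.

(* Proof idea (Petrov-Galerkin interpolation).  Each transfer function is an
   output map applied to the solution of a linear system K(s) x = F, where the
   right-hand side F is built from previously computed solutions.  The reduced
   system solves instead (W^H K(s) V) y = W^H F and reconstructs V y.
   The one real fact is [galerkin_solve_exact]: if the full solution
   K(s)^-1 F lies in the column span of V and W^H K(s) V is invertible, then
   V y is exactly K(s)^-1 F.
   The theorem follows by applying these level by level: V11, V12 first, then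
   V2 (which uses V11), then V31 (which uses V2) and V32 (which uses V11, V12). *)

Section Galerkin.
Variable F : fieldType.
Variables (n r : nat) (Wh : 'M[F]_(r, n)) (V : 'M[F]_(n, r)).

Definition galerkin_solve k (K : 'M[F]_n) (X : 'M[F]_(n, k)) : 'M[F]_(r, k) :=
  invmx (Wh *m K *m V) *m (Wh *m X).

Lemma galerkin_solve_exact k (K : 'M[F]_n) (X : 'M[F]_(n, k)) :
  Wh *m K *m V \in unitmx -> K \in unitmx ->
  ((invmx K *m X)^T <= V^T)%MS ->
  V *m galerkin_solve K X = invmx K *m X.
Proof.
move=> unitKr unitK /submxP [Y solY].
have {}solY : invmx K *m X = V *m Y^T.
  by rewrite -[_ *m X]trmxK solY trmx_mul trmxK.
have projX : Wh *m X = Wh *m K *m V *m Y^T.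
  by rewrite -!mulmxA -solY mulKVmx.
by rewrite /galerkin_solve projX mulKmx.
Qed.

Lemma galerkin_tens1 m k (N : 'M[F]_(n, m * n)) (Y : 'M[F]_(r, k)) :
  Wh *m N *m ((1%:M : 'M[F]_m) *t V) *m (1%:M *t Y)
  = Wh *m (N *m (1%:M *t (V *m Y))).
Proof. by rewrite -!mulmxA tensmx_mul mul1mx. Qed.

Lemma galerkin_tens k1 k2 (H : 'M[F]_(n, n * n))
    (Y1 : 'M[F]_(r, k1)) (Y2 : 'M[F]_(r, k2)) :
  Wh *m H *m (V *t V) *m (Y1 *t Y2) = Wh *m (H *m ((V *m Y1) *t (V *m Y2))).
Proof. by rewrite -!mulmxA tensmx_mul. Qed.

Lemma galerkin_output q k (C : 'M[F]_(q, n)) (K : 'M[F]_n) (X : 'M[F]_(n, k)) :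
  C *m V *m invmx (Wh *m K *m V) *m (Wh *m X) = C *m (V *m galerkin_solve K X).
Proof. by rewrite /galerkin_solve !mulmxA. Qed.

End Galerkin.

Theorem proposition4p4 (R : realType) (n m p r : nat)
  (Cf : R[i] -> 'M[R[i]]_(p, n)) (Kf : R[i] -> 'M[R[i]]_n)
  (Bf : R[i] -> 'M[R[i]]_(n, m)) (Nf : R[i] -> 'M[R[i]]_(n, m * n))
  (Hf : R[i] -> R[i] -> 'M[R[i]]_(n, n * n))
  (V W : 'M[R[i]]_(n, r)) (s1 s2 s3 : R[i]) :
  Kf s1 \in unitmx -> Kf s2 \in unitmx -> Kf s3 \in unitmx ->
  let V11 := invmx (Kf s1) *m Bf s1 in
  let V12 := invmx (Kf s2) *m Bf s2 in
  let V2 := invmx (Kf s2) *m (Nf s1 *m ((1%:M : 'M_m) *t V11)) in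
  let V31 := invmx (Kf s3) *m (Nf s2 *m ((1%:M : 'M_m) *t V2)) in
  let V32 := invmx (Kf s3) *m (Hf s2 s1 *m (V12 *t V11)) in
  \rank V = r ->
  (((row_mx V11 (row_mx V12 (row_mx V2 (row_mx V31 V32))))^T) <= V^T)%MS ->
  \rank W = r ->
  ctrmx W *m Kf s1 *m V \in unitmx ->
  ctrmx W *m Kf s2 *m V \in unitmx ->
  ctrmx W *m Kf s3 *m V \in unitmx ->
  let Ch := redC V Cf in
  let Kh := redK V W Kf in
  let Bh := redB W Bf in
  let Nh := redN V W Nf in
  let Hh := redH V W Hf in
  [/\ G1B Cf Kf Bf s1 = G1B Ch Kh Bh s1,
      G1B Cf Kf Bf s2 = G1B Ch Kh Bh s2,
      G2NB Cf Kf Bf Nf s1 s2 = G2NB Ch Kh Bh Nh s1 s2,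
      G3NNB Cf Kf Bf Nf s1 s2 s3 = G3NNB Ch Kh Bh Nh s1 s2 s3
    & G3HBB Cf Kf Bf Hf s1 s2 s3 = G3HBB Ch Kh Bh Hh s1 s2 s3].
Proof.
move=> uK1 uK2 uK3 V11 V12 V2 V31 V32 _ spanV _ uKr1 uKr2 uKr3.
move=> Ch Kh Bh Nh Hh.
move: spanV; rewrite !tr_row_mx !col_mx_sub => /and5P[sp11 sp12 sp2 sp31 sp32].
have E11 := galerkin_solve_exact uKr1 uK1 sp11.
have E12 := galerkin_solve_exact uKr2 uK2 sp12.
have E2 := galerkin_solve_exact uKr2 uK2 sp2.
have E31 := galerkin_solve_exact uKr3 uK3 sp31.
have E32 := galerkin_solve_exact uKr3 uK3 sp32.
rewrite /G1B /G2NB /G3NNB /G3HBB /Ch /Kh /Bh /Nh /Hh.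
rewrite /redC /redK /redB /redN /redH.
split.
- by rewrite galerkin_output E11; apply/esym/mulmxA.
- by rewrite galerkin_output E12; apply/esym/mulmxA.
- by rewrite galerkin_tens1 E11 galerkin_output E2; apply/esym/mulmxA.
- by rewrite !galerkin_tens1 E11 E2 galerkin_output E31; apply/esym/mulmxA.
- by rewrite galerkin_tens E12 E11 galerkin_output E32; apply/esym/mulmxA.
Qed.
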